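(* Let $(t_1,s_1),(t_2,s_2)\in\mathbb{C}^\times\times\mathbb{C}^\times$ with $t_1\ne t_2$ and $s_1\neq s_2$, let $X_1=A_2(t_1,s_1)$, $X_2=A_2(t_2,s_2)$, let $\varepsilon_0=\det(X_1)+\det(X_2)-\det(X_1+X_2)$, and let $f_n(z)=\sum_{k=0}^{\lfloor n/2\rfloor}(-1)^k\frac{n}{n-k}\binom{n-k}{k}z^{n-2k}$. Then for all $n\in\mathbb{N}$, $\bigl((X_1X_2)^n\bigr)^{-1}=f_n(\varepsilon_0)I_2-(X_1X_2)^n$ and $\bigl((X_2X_1)^n\bigr)^{-1}=f_n(\varepsilon_0)I_2-(X_2X_1)^n$.
   Context: $\mathbb{C}^\times=\mathbb{C}\setminus\{0\}$; $A_2(t,s)=\begin{pmatrix} t & s\\ \frac{1-t^2}{s} & -t\end{pmatrix}$; $I_2$ is the $2\times2$ identity matrix. *)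

From HB Require Import structures.
From mathcomp Require Import all_boot all_order all_algebra.
From mathcomp Require Import complex.
From mathcomp Require Import Rstruct.
From Stdlib Require Import Reals.
Set Implicit Arguments. Unset Strict Implicit. Unset Printing Implicit Defensive.
Import Order.TTheory GRing.Theory Num.Theory.
Local Open Scope ring_scope.

Definition CC : Type := (Rdefinitions.R)[i].

Definition A2 (t s : CC) : 'M[CC]_2 :=
  \matrix_(i < 2, j < 2)
    if i == 0 then (if j == 0 then t else s)
    else (if j == 0 then (1 - t ^+ 2) / s else - t).

(* f_n(z) = sum_{k=0}^{floor(n/2)} (-1)^k n/(n-k) binom(n-k,k) z^(n-2k).
   For n = 0 the term n/(n-k) is 0/0; we use the standard convention
   f_0 = 2 (Lucas / Dickson polynomial convention). *)
Definition fpoly (n : nat) (z : CC) : CC :=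
  if n == 0%N then 2 else
  \sum_(0 <= k < (n %/ 2).+1)
     (-1) ^+ k * (n%:R / (n - k)%:R) * ('C(n - k, k))%:R * z ^+ (n - 2 * k).

From HB Require Import structures.
From mathcomp Require Import all_boot all_order all_algebra.
From mathcomp Require Import complex.
From mathcomp Require Import Rstruct.
From mathcomp Require Import ring zify.
Set Implicit Arguments. Unset Strict Implicit. Unset Printing Implicit Defensive.
Import Order.TTheory GRing.Theory Num.Theory.
Local Open Scope ring_scope.

(* X1 and X2 have determinant -1 and trace 0, so M = X1 X2 (and likewise
   X2 X1) has determinant 1, and the 2x2 polarization identity
   det (A + B) = det A + det B + tr A tr B - tr (A B) gives eps0 = tr M.
   For a 2x2 matrix of determinant 1 the adjugate is the inverse, so
   M^-1 = tr M - M, and Cayley-Hamilton gives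
   tr (M^(n+2)) = tr M tr (M^(n+1)) - tr (M^n).  The polynomials f_n obey the
   same recurrence with f_0 = 2 and f_1 = z (they are the differences
   E_n - E_(n-2) of the second-kind Dickson polynomials
   E_n = sum_k (-1)^k C(n-k,k) z^(n-2k)), hence tr (M^n) = f_n (eps0) and
   (M^n)^-1 = f_n (eps0) - M^n. *)

Section Matrix2.
Variable R : comNzRingType.
Implicit Types A B : 'M[R]_2.

Lemma ord2P (i : 'I_2) : i = 0 \/ i = 1.
Proof. by case: i => [[|[|i]]] Hi //; [left|right]; apply/val_inj. Qed.

Lemma mx2P A B :
  A 0 0 = B 0 0 -> A 0 1 = B 0 1 -> A 1 0 = B 1 0 -> A 1 1 = B 1 1 -> A = B.
Proof.
move=> e00 e01 e10 e11; apply/matrixP => i j.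
by case: (ord2P i) => ->; case: (ord2P j) => ->.
Qed.

Lemma lift_ord2 (i : 'I_2) (j : 'I_1) : lift i j = if i == 0 then 1 else 0.
Proof. by apply/val_inj; case: (ord2P i) => ->; case: j => [[]]. Qed.

Lemma mxtrace2 A : \tr A = A 0 0 + A 1 1.
Proof. by rewrite /mxtrace !big_ord_recl big_ord0 addr0 lift_ord2 /=. Qed.

Lemma mulmx2E A B i j : (A *m B) i j = A i 0 * B 0 j + A i 1 * B 1 j.
Proof. by rewrite mxE !big_ord_recl big_ord0 addr0 lift_ord2 /=. Qed.

Lemma cofactor2 A i j :
  cofactor A i j = (-1) ^+ (i + j) * A (lift i 0) (lift j 0).
Proof. by rewrite /cofactor det_mx11 !mxE. Qed.

Lemma det_mx2 A : \det A = A 0 0 * A 1 1 - A 0 1 * A 1 0.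
Proof.
rewrite (expand_det_row _ 0) !big_ord_recl big_ord0 addr0 /=.
rewrite !cofactor2 !lift_ord2 /= !add0n modn_small // expr0 expr1 (_ : ord0 = 0) //; ring.
Qed.

Lemma adj_mx2 A : \adj A = \tr A *: 1%:M - A.
Proof.
apply: mx2P; rewrite !mxE !cofactor2 mxtrace2 !lift_ord2 /=; ring.
Qed.

Lemma mx2_Cayley_Hamilton A : A *m A = \tr A *: A - (\det A)%:M.
Proof.
have := mul_mx_adj A; rewrite adj_mx2 mulmxBr -scalemxAr mulmx1 => <-.
by rewrite opprB addrC addrNK.
Qed.

Lemma det_mx2D A B :
  \det (A + B) = \det A + \det B + \tr A * \tr B - \tr (A *m B).
Proof. by rewrite !det_mx2 !mxtrace2 !mulmx2E !mxE; ring. Qed.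

Lemma mxtrace_exprSS A n :
  \tr (A ^+ n.+2) = \tr A * \tr (A ^+ n.+1) - \det A * \tr (A ^+ n).
Proof.
rewrite exprSr [A ^+ n.+1]exprSr -mulrA -!mulmxE mx2_Cayley_Hamilton.
by rewrite mulmxBr -scalemxAr mul_mx_scalar mulmxE -exprSr raddfB /= !mxtraceZ.
Qed.

End Matrix2.

Lemma det_mxX (R : comNzRingType) n (A : 'M[R]_n.+1) k : \det (A ^+ k) = \det A ^+ k.
Proof. by elim: k => [|k IHk]; rewrite ?det1 // !exprS -mulmxE det_mulmx IHk. Qed.

Lemma invmx_det1 (R : comUnitRingType) (A : 'M[R]_2) :
  \det A = 1 -> invmx A = \tr A *: 1%:M - A.
Proof. by move=> detA; rewrite /invmx unitmxE detA unitr1 invr1 scale1r adj_mx2. Qed.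

Section SecondKindDickson.
Variables (R : comNzRingType) (z : R).

Definition dickson2_term n k : R := (-1) ^+ k * 'C(n - k, k)%:R * z ^+ (n - 2 * k).

Definition dickson2 n : R := \sum_(k < (n %/ 2).+1) dickson2_term n k.

Lemma dickson2_term_eq0 n k : (n < 2 * k)%N -> dickson2_term n k = 0.
Proof. by move=> ltn2k; rewrite /dickson2_term bin_small ?mulr0 ?mul0r //; lia. Qed.

Lemma dickson2E n m : (n %/ 2 < m)%N -> dickson2 n = \sum_(k < m) dickson2_term n k.
Proof.
move=> ltnm; rewrite /dickson2 -!(big_mkord xpredT).
rewrite [RHS](big_cat_nat (n := (n %/ 2).+1)) //= [X in _ + X]big1_seq ?addr0 //.
by move=> k /andP[_ /[!mem_index_iota] /andP[lek _]]; apply: dickson2_term_eq0; lia.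
Qed.

Lemma dickson2_termSS n k :
  dickson2_term n.+2 k.+1 = z * dickson2_term n.+1 k.+1 - dickson2_term n k.
Proof.
have [ltn2k | len2k] := ltnP n (2 * k).
  by rewrite !dickson2_term_eq0 ?mulr0 ?subr0 //; lia.
have [m ->] : exists m, n = (2 * k + m)%N by exists (n - 2 * k)%N; lia.
rewrite /dickson2_term.
rewrite (_ : (2 * k + m).+2 - k.+1 = (k + m).+1)%N; last lia.
rewrite (_ : (2 * k + m).+1 - k.+1 = k + m)%N; last lia.
rewrite (_ : (2 * k + m).+2 - 2 * k.+1 = m)%N; last lia.
rewrite (_ : 2 * k + m - k = k + m)%N; last lia.
rewrite (_ : 2 * k + m - 2 * k = m)%N; last lia.
rewrite binS natrD.
case: m => [|m]; first by rewrite addn0 bin_small // exprS; ring.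
rewrite (_ : (2 * k + m.+1).+1 - 2 * k.+1 = m)%N; last lia.
by rewrite !exprS; ring.
Qed.

Lemma dickson2_0 : dickson2 0 = 1.
Proof. by rewrite /dickson2 big_ord1 /dickson2_term bin0 !expr0 !mul1r. Qed.

Lemma dickson2_1 : dickson2 1 = z.
Proof. by rewrite /dickson2 big_ord1 /dickson2_term bin0 expr0 expr1 !mul1r. Qed.

Lemma dickson2SS n : dickson2 n.+2 = z * dickson2 n.+1 - dickson2 n.
Proof.
rewrite (@dickson2E n.+2 n.+3) ?(@dickson2E n.+1 n.+3) ?(@dickson2E n n.+2); try lia.
rewrite big_ord_recl [X in z * X]big_ord_recl.
under eq_bigr do rewrite lift0 dickson2_termSS.
under [X in z * (_ + X)]eq_bigr do rewrite lift0.
rewrite big_split /= sumrN -mulr_sumr mulrDr addrA.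
by rewrite /dickson2_term !subn0 !bin0 exprS !mulr1 mulrCA.
Qed.

End SecondKindDickson.

Lemma dickson_coef_split (F : numFieldType) n k : (k <= n)%N ->
  n.+2%:R / (n.+1 - k)%:R * 'C(n.+1 - k, k.+1)%:R
  = 'C(n.+1 - k, k.+1)%:R + 'C(n - k, k)%:R :> F.
Proof.
move=> lekn; set a := (n.+1 - k)%N.
have a_neq0 : a%:R != 0 :> F by rewrite pnatr_eq0 /a; lia.
have e : (n.+2 * 'C(a, k.+1) = ('C(a, k.+1) + 'C(n - k, k)) * a)%N.
  rewrite mulnDl [('C(n - k, k) * a)%N]mulnC (_ : n - k = a.-1)%N; last by rewrite /a; lia.
  by rewrite mul_bin_diag [(_ * a)%N]mulnC -mulnDl; congr (_ * _)%N; rewrite /a; lia.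
by rewrite mulrAC -natrM e natrM mulfK // natrD.
Qed.

Section Fpoly.
Variable z : CC.

Lemma fpoly0 : fpoly 0 z = 2. Proof. by []. Qed.

Lemma fpoly1 : fpoly 1 z = z.
Proof. by rewrite /fpoly /= big_nat1 subn0 bin0 divr1 expr0 expr1 !mul1r. Qed.

Lemma fpoly_dickson2 n : fpoly n.+2 z = dickson2 z n.+2 - dickson2 z n.
Proof.
rewrite /fpoly /= big_mkord (_ : (n.+2 %/ 2).+1 = (n %/ 2).+2)%N; last lia.
rewrite (@dickson2E _ z n.+2 (n %/ 2).+2); last lia.
rewrite big_ord_recl [in RHS]big_ord_recl /dickson2 -addrA -sumrB.
congr (_ + _); first by rewrite /dickson2_term !subn0 divff ?mulr1 // pnatr_eq0.
apply: eq_bigr => i _; rewrite lift0 /dickson2_term.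
rewrite subSS (_ : n.+2 - 2 * i.+1 = n - 2 * i)%N; last lia.
rewrite -[_ * _ * _%:R]mulrA dickson_coef_split; last by have := ltn_ord i; lia.
by rewrite !exprS; ring.
Qed.

Lemma fpolySS n : fpoly n.+2 z = z * fpoly n.+1 z - fpoly n z.
Proof.
case: n => [|[|n]]; rewrite !fpoly_dickson2 ?fpoly0 ?fpoly1 !dickson2SS;
  rewrite ?dickson2_0 ?dickson2_1; ring.
Qed.

End Fpoly.

Lemma mxtrace_expr_det1 (A : 'M[CC]_2) n :
  \det A = 1 -> \tr (A ^+ n) = fpoly n (\tr A).
Proof.
move=> detA; suff: \tr (A ^+ n) = fpoly n (\tr A) /\ \tr (A ^+ n.+1) = fpoly n.+1 (\tr A).
  by case.
elim: n => [|n [IHn IHSn]]; first by rewrite expr0 expr1 mxtrace1 fpoly0 fpoly1.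
by split=> //; rewrite mxtrace_exprSS detA mul1r IHn IHSn fpolySS.
Qed.

Lemma invmx_expr_det1 (A : 'M[CC]_2) n :
  \det A = 1 -> invmx (A ^+ n) = fpoly n (\tr A) *: 1%:M - A ^+ n.
Proof.
by move=> detA; rewrite invmx_det1 ?mxtrace_expr_det1 // det_mxX detA expr1n.
Qed.

Lemma det_A2 t s : s != 0 -> \det (A2 t s) = -1.
Proof. by move=> s_neq0; rewrite det_mx2 !mxE /=; field. Qed.

Lemma mxtrace_A2 t s : \tr (A2 t s) = 0.
Proof. by rewrite mxtrace2 !mxE /= subrr. Qed.

Theorem mainTheorem11 (t1 s1 t2 s2 : CC)
  (ht1 : t1 != 0) (hs1 : s1 != 0) (ht2 : t2 != 0) (hs2 : s2 != 0)
  (ht : t1 != t2) (hs : s1 != s2) (n : nat) :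
  let X1 := A2 t1 s1 in
  let X2 := A2 t2 s2 in
  let eps0 := \det X1 + \det X2 - \det (X1 + X2) in
  invmx ((X1 *m X2) ^+ n) = fpoly n eps0 *: 1%:M - (X1 *m X2) ^+ n /\
  invmx ((X2 *m X1) ^+ n) = fpoly n eps0 *: 1%:M - (X2 *m X1) ^+ n.
Proof.
move=> X1 X2 eps0.
have eps0E : eps0 = \tr (X1 *m X2).
  by rewrite /eps0 det_mx2D !mxtrace_A2 mul0r addr0; ring.
have detX12 : \det (X1 *m X2) = 1 by rewrite det_mulmx !det_A2 // mulrNN mulr1.
have detX21 : \det (X2 *m X1) = 1 by rewrite det_mulmx !det_A2 // mulrNN mulr1.
rewrite eps0E; split; first exact: invmx_expr_det1.
by rewrite mxtrace_mulC; exact: invmx_expr_det1.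
Qed.
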